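(* Let $p>1$, fix a choice of sign $\pm$, and let $f\in C_0^2(\mathbb{R})$, $g\in C_0^1(\mathbb{R})$ satisfy $\pm f'(x_0)+g(x_0)\neq0$ for some $x_0\in\mathbb{R}$ (same sign as in the equation below). Consider \[ \begin{cases} u_{tt}-u_{xx}=|u_t\pm u_x|^{p-1}(u_t\pm u_x) & \text{in } \mathbb{R}\times(0,T),\\ u(x,0)=\varepsilon f(x),\quad u_t(x,0)=\varepsilon g(x), & x\in\mathbb{R}, \end{cases} \] with $\varepsilon>0$. Then there exists a constant $C>0$ independent of $\varepsilon$ (one may take $C=|\pm f'(x_0)+g(x_0)|^{1-p}/(p-1)$) such that for every $\varepsilon>0$, no classical solution on $\mathbb{R}\times[0,T]$ exists if $T>C\varepsilon^{-(p-1)}$. Consequently the lifespan satisfies $T(\varepsilon)\le C\varepsilon^{-(p-1)}$.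
   Context: The lifespan $T(\varepsilon)$ is the supremum of all $T>0$ such that a classical solution of the problem exists on $\mathbb{R}\times[0,T]$ for the fixed data $(f,g)$. *)

From Stdlib Require Import Reals.
From Coquelicot Require Import Coquelicot.
Open Scope R_scope.

Definition compact_support (f : R -> R) : Prop :=
  exists M : R, forall x : R, M < Rabs x -> f x = 0.

Definition C2_0 (f : R -> R) : Prop :=
  (forall x, ex_derive f x) /\
  (forall x, ex_derive (Derive f) x) /\
  (forall x, continuous (Derive (Derive f)) x) /\
  compact_support f.

Definition C1_0 (g : R -> R) : Prop :=
  (forall x, ex_derive g x) /\
  (forall x, continuous (Derive g) x) /\
  compact_support g.

Definition px (u : R -> R -> R) : R -> R -> R := fun x t => Derive (fun y => u y t) x.
Definition pt (u : R -> R -> R) : R -> R -> R := fun x t => Derive (fun s => u x s) t.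

Definition open_strip (T x t : R) : Prop := 0 < t < T.
Definition closed_strip (T : R) (p : R * R) : Prop := 0 <= snd p <= T.

Definition cont_on_closed_strip (T : R) (F : R -> R -> R) : Prop :=
  forall x t, 0 <= t <= T ->
    filterlim (fun p : R * R => F (fst p) (snd p))
      (within (closed_strip T) (locally (x, t))) (locally (F x t)).

Definition ext_cont (T : R) (D E : R -> R -> R) : Prop :=
  (forall x t, 0 < t < T -> E x t = D x t) /\ cont_on_closed_strip T E.

(** u in C^2(R x [0,T]) in the standard sense of C^2 of the closure of an
    open set: u is C^2 in R x (0,T), u is continuous on R x [0,T], and all
    partial derivatives of order 1 and 2 extend continuously to R x [0,T]. *)
Definition C2_closed_strip (T : R) (u : R -> R -> R) : Prop :=
  (forall x t, 0 < t < T ->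
     ex_derive (fun y => u y t) x /\ ex_derive (fun s => u x s) t /\
     ex_derive (fun y => px u y t) x /\ ex_derive (fun s => px u x s) t /\
     ex_derive (fun y => pt u y t) x /\ ex_derive (fun s => pt u x s) t) /\
  cont_on_closed_strip T u /\
  (exists E, ext_cont T (px u) E) /\
  (exists E, ext_cont T (pt u) E) /\
  (exists E, ext_cont T (px (px u)) E) /\
  (exists E, ext_cont T (pt (px u)) E) /\
  (exists E, ext_cont T (px (pt u)) E) /\
  (exists E, ext_cont T (pt (pt u)) E).

(** Classical solution on R x [0,T] of
      u_tt - u_xx = |u_t + s u_x|^(p-1) (u_t + s u_x)   in R x (0,T),
      u(x,0) = eps f(x),  u_t(x,0) = eps g(x),
    where s = +1 or -1 encodes the sign choice. u_t(x,0) is the value at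
    t = 0 of the continuous extension of u_t. Note |w|^(p-1) w is written
    with Rpower; at w = 0 the product is 0 regardless of Rpower 0 _. *)
Definition classical_solution (p s eps : R) (f g : R -> R) (T : R)
    (u : R -> R -> R) : Prop :=
  0 < T /\
  C2_closed_strip T u /\
  (forall x t, 0 < t < T ->
     let w := pt u x t + s * px u x t in
     pt (pt u) x t - px (px u) x t = Rpower (Rabs w) (p - 1) * w) /\
  (forall x, u x 0 = eps * f x) /\
  (exists E, ext_cont T (pt u) E /\ forall x, E x 0 = eps * g x).

From Stdlib Require Import Reals Lra Classical.
From Coquelicot Require Import Coquelicot.
Open Scope R_scope.

(* Along the characteristic x = x0 - s t the quantity w = u_t + s u_x satisfies
   w' = u_tt - u_xx = |w|^(p-1) w, with w(0) = eps (s f'(x0) + g(x0)).  This scalar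
   ODE preserves the sign of w, and w^(1-p) + (p-1) t is constant while w > 0, so
   (p-1) t < |w(0)|^(1-p) for every time t the solution exists. *)

Lemma continuity_pt_locally_gt (h : R -> R) (x c : R) :
  continuity_pt h x -> c < h x -> locally x (fun y => c < h y).
Proof.
intros Hh Hc.
destruct (proj1 (continuity_pt_locally h x) Hh (mkposreal _ (Rgt_minus _ _ Hc))) as [d Hd].
exists d. intros y Hy. specialize (Hd y Hy). apply Rabs_lt_between' in Hd. simpl in Hd. lra.
Qed.

Lemma continuity_pt_locally_lt (h : R -> R) (x c : R) :
  continuity_pt h x -> h x < c -> locally x (fun y => h y < c).
Proof.
intros Hh Hc.
destruct (continuity_pt_locally_gt (fun y => - h y) x (- c)) as [d Hd].
- now apply continuity_pt_opp.
- lra.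
- exists d. intros y Hy. specialize (Hd y Hy). simpl in Hd. lra.
Qed.

Lemma exit_time_above (h : R -> R) (a b c : R) : a < b ->
  (forall t, a <= t <= b -> continuity_pt h t) -> c < h a ->
  exists S, a < S <= b /\ (forall s, a <= s < S -> c < h s) /\ (S < b -> h S <= c).
Proof.
intros Hab Hh Ha.
set (A := fun t => a <= t <= b /\ forall s, a <= s <= t -> c < h s).
assert (HAa : A a).
{ split; [lra|]. intros s Hs. now replace s with a by lra. }
assert (HA_bound : bound A) by (exists b; intros t [Ht _]; lra).
destruct (completeness A HA_bound (ex_intro _ a HAa)) as [S [HS_ub HS_lub]].
assert (HSb : S <= b) by (apply HS_lub; intros t [Ht _]; lra).
assert (Hbelow : forall s, a <= s < S -> c < h s).
{ intros s Hs. apply NNPP. intros Hns.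
  assert (S <= s); [|lra].
  apply HS_lub. intros t [Ht HAt]. apply Rnot_lt_le. intros Hst.
  apply Hns, HAt. lra. }
assert (Hextend : forall x, a <= x < b -> (forall s, a <= s < x -> c < h s) -> c < h x ->
                    exists t, x < t /\ A t).
{ intros x Hx Hbefore Hhx.
  destruct (continuity_pt_locally_gt h x c (Hh x ltac:(lra)) Hhx) as [d Hd].
  pose proof (cond_pos d); pose proof (Rmin_l d (b - x)); pose proof (Rmin_r d (b - x)).
  pose proof (Rmin_glb_lt d (b - x) 0 (cond_pos d) ltac:(lra)).
  exists (x + Rmin d (b - x) / 2). split; [lra|]. split; [lra|].
  intros s Hs. destruct (Rlt_le_dec s x); [apply Hbefore; lra|].
  apply Hd. change (Rabs (s - x) < d). rewrite Rabs_pos_eq; lra. }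
assert (HaS : a < S).
{ destruct (Hextend a) as [t [Hat HAt]]; [lra|intros; lra|exact Ha|].
  specialize (HS_ub t HAt). lra. }
exists S. split; [lra|]. split; [exact Hbelow|]. intros HSb'.
apply Rnot_lt_le. intros HcS.
destruct (Hextend S) as [t [HSt HAt]]; [lra|exact Hbelow|exact HcS|].
specialize (HS_ub t HAt). lra.
Qed.

Lemma first_crossing (h : R -> R) (a b c : R) : a <= b ->
  (forall t, a <= t <= b -> continuity_pt h t) -> c < h a -> h b <= c ->
  exists t, a < t <= b /\ h t = c /\ forall s, a <= s < t -> c < h s.
Proof.
intros Hab Hh Ha Hb.
assert (Hab' : a < b) by (destruct (Req_dec a b) as [<-|]; lra).
destruct (exit_time_above h a b c Hab' Hh Ha) as [S [HS [Hbelow Hexit]]].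
exists S. split; [exact HS|]. split; [|exact Hbelow].
apply Rle_antisym.
- destruct (Rlt_or_le S b) as [HSb|HSb]; [now apply Hexit|now replace S with b by lra].
- apply Rnot_lt_le. intros HSc.
  destruct (continuity_pt_locally_lt h S c (Hh S ltac:(lra)) HSc) as [d Hd].
  set (s := Rmax a (S - d / 2)).
  pose proof (Rmax_l a (S - d / 2)); pose proof (Rmax_r a (S - d / 2)); pose proof (cond_pos d).
  assert (Hs : a <= s < S) by (unfold s, Rmax; destruct Rle_dec; lra).
  assert (h s < c); [|specialize (Hbelow s Hs); lra].
  apply Hd. change (Rabs (s - S) < d). rewrite Rabs_left by lra.
  unfold s, Rmax; destruct Rle_dec; lra.
Qed.

Lemma autonomous_ode_nondecreasing (F phi : R -> R) (T : R) :
  (forall y, 0 < y -> 0 < F y) ->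
  (forall t, 0 <= t < T -> continuity_pt phi t) ->
  (forall t, 0 < t < T -> is_derive phi t (F (phi t))) ->
  0 < phi 0 -> forall t, 0 <= t < T -> phi 0 <= phi t.
Proof.
intros HF Hc Hd H0 t1 Ht1.
apply Rnot_lt_le. intros Ht1_lt.
(* At the first time [phi] drops to this positive level it is still positive on
   [0, t], so the mean value theorem puts it above [phi 0] instead. *)
set (c := (Rmax (phi t1) 0 + phi 0) / 2).
pose proof (Rmax_l (phi t1) 0); pose proof (Rmax_r (phi t1) 0).
pose proof (Rmax_lub_lt _ _ _ Ht1_lt H0).
destruct (first_crossing phi 0 t1 c ltac:(lra)) as [t [Ht [Hct Habove]]].
- intros s Hs. apply Hc. lra.
- unfold c. lra.
- unfold c. lra.
- destruct (MVT_gen phi 0 t (fun s => F (phi s))) as [xi [Hxi Hmvt]].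
  + intros s Hs. rewrite Rmin_left, Rmax_right in Hs by lra. apply Hd. lra.
  + intros s Hs. rewrite Rmin_left, Rmax_right in Hs by lra. apply Hc. lra.
  + rewrite Rmin_left, Rmax_right in Hxi by lra.
    assert (Hxi_pos : 0 < phi xi).
    { destruct (Rlt_or_le xi t) as [Hlt|Hge].
      - assert (c < phi xi) by (apply Habove; lra). unfold c in *; lra.
      - replace xi with t by lra. unfold c in Hct; lra. }
    pose proof (HF _ Hxi_pos).
    assert (0 < F (phi xi) * (t - 0)) by (apply Rmult_lt_0_compat; lra).
    unfold c in Hct; lra.
Qed.

Definition power_nonlinearity (p y : R) : R := Rpower (Rabs y) (p - 1) * y.

Lemma power_nonlinearity_pos p y : 0 < y -> 0 < power_nonlinearity p y.
Proof.
intros Hy. unfold power_nonlinearity.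
apply Rmult_lt_0_compat; [apply exp_pos|exact Hy].
Qed.

Lemma power_nonlinearity_opp p y :
  power_nonlinearity p (- y) = - power_nonlinearity p y.
Proof. unfold power_nonlinearity. rewrite Rabs_Ropp. ring. Qed.

Lemma is_derive_power_ode_invariant p phi t : 0 < phi t ->
  is_derive phi t (power_nonlinearity p (phi t)) ->
  is_derive (fun s => Rpower (phi s) (1 - p) + (p - 1) * s) t 0.
Proof.
intros Hpos Hd.
evar (l : R).
assert (HG : is_derive (fun s => Rpower (phi s) (1 - p) + (p - 1) * s) t l).
{ apply (is_derive_plus (fun s => Rpower (phi s) (1 - p)) (fun s => (p - 1) * s)).
  - apply (is_derive_comp (fun y => Rpower y (1 - p)) phi); [|exact Hd].
    apply is_derive_Reals, derivable_pt_lim_power, Hpos.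
  - apply is_derive_scal, is_derive_id. }
subst l. eapply is_derive_ext; [intros s; reflexivity|].
replace 0 with (plus (scal (power_nonlinearity p (phi t)) ((1 - p) * Rpower (phi t) (1 - p - 1)))
                     (scal (p - 1) one)); [exact HG|].
unfold plus, scal, one, power_nonlinearity; simpl; unfold mult; simpl.
rewrite Rabs_pos_eq by lra.
replace (1 - p - 1) with (- (p - 1) + - (1)) by ring.
rewrite Rpower_plus, !Rpower_Ropp, Rpower_1 by lra.
pose proof (exp_pos ((p - 1) * ln (phi t))).
unfold Rpower. field. lra.
Qed.

Lemma power_ode_lifespan_pos (p T : R) (phi : R -> R) : 1 < p ->
  (forall t, 0 <= t < T -> continuity_pt phi t) ->
  (forall t, 0 < t < T -> is_derive phi t (power_nonlinearity p (phi t))) ->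
  0 < phi 0 -> T <= Rpower (phi 0) (1 - p) / (p - 1).
Proof.
intros Hp Hc Hd H0.
assert (Hpos : forall t, 0 <= t < T -> 0 < phi t).
{ intros t Ht.
  pose proof (autonomous_ode_nondecreasing _ phi T (power_nonlinearity_pos p) Hc Hd H0 t Ht).
  lra. }
set (B := Rpower (phi 0) (1 - p) / (p - 1)).
apply Rnot_lt_le. intros HBT.
assert (HB : 0 <= B) by (left; apply Rdiv_lt_0_compat; [apply exp_pos|lra]).
set (G := fun s => Rpower (phi s) (1 - p) + (p - 1) * s).
destruct (MVT_gen G 0 B (fun _ => 0)) as [xi [_ HGB]].
- intros s Hs. rewrite Rmin_left, Rmax_right in Hs by lra.
  apply is_derive_power_ode_invariant; [apply Hpos; lra|apply Hd; lra].
- intros s Hs. rewrite Rmin_left, Rmax_right in Hs by lra.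
  pose proof (Hpos s ltac:(lra)) as Hs_pos.
  apply continuity_pt_plus.
  + apply (continuity_pt_comp phi (fun y => Rpower y (1 - p))); [apply Hc; lra|].
    apply derivable_continuous_pt.
    exists ((1 - p) * Rpower (phi s) (1 - p - 1)).
    now apply derivable_pt_lim_power.
  + apply continuity_pt_scal, continuity_pt_id.
- unfold G in HGB.
  assert (HBdef : (p - 1) * B = Rpower (phi 0) (1 - p)) by (unfold B; field; lra).
  pose proof (exp_pos ((1 - p) * ln (phi B))).
  unfold Rpower at 1 in HGB. lra.
Qed.

Lemma power_ode_lifespan (p T : R) (phi : R -> R) : 1 < p ->
  (forall t, 0 <= t < T -> continuity_pt phi t) ->
  (forall t, 0 < t < T -> is_derive phi t (power_nonlinearity p (phi t))) ->
  phi 0 <> 0 -> T <= Rpower (Rabs (phi 0)) (1 - p) / (p - 1).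
Proof.
intros Hp Hc Hd H0.
destruct (Rlt_or_le 0 (phi 0)) as [Hpos|Hneg].
- rewrite Rabs_pos_eq by lra. now apply power_ode_lifespan_pos.
- rewrite Rabs_left by lra.
  apply (power_ode_lifespan_pos p T (fun t => - phi t) Hp); [| |lra].
  + intros t Ht. now apply continuity_pt_opp, Hc.
  + intros t Ht. rewrite power_nonlinearity_opp. now apply (is_derive_opp phi), Hd.
Qed.

Lemma increment_bound (f df : R -> R) (x y L e : R) :
  (forall t, Rabs (t - x) <= Rabs (y - x) -> is_derive f t (df t) /\ Rabs (df t - L) <= e) ->
  Rabs (f y - f x - L * (y - x)) <= e * Rabs (y - x).
Proof.
intros H.
replace (f y - f x - L * (y - x)) with ((f y - L * y) - (f x - L * x)) by ring.
apply (bounded_variation (fun t => f t - L * t) (fun t => df t - L)).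
intros t Ht. destruct (H t Ht) as [Hd Hb]. split; [|exact Hb].
apply (is_derive_minus f (fun t => L * t)); [exact Hd|].
auto_derive; [exact I|ring].
Qed.

Lemma cont_on_closed_strip_eps T F x t : cont_on_closed_strip T F -> 0 <= t <= T ->
  forall eps : posreal, exists delta : posreal, forall y v, 0 <= v <= T ->
    Rabs (y - x) < delta -> Rabs (v - t) < delta -> Rabs (F y v - F x t) < eps.
Proof.
intros HF Ht eps.
destruct (HF x t Ht _ (locally_ball (F x t) eps)) as [d Hd].
exists d. intros y v Hv Hy Hvt.
now apply (Hd (y, v)).
Qed.

Lemma locally_2d_open_strip T x t : 0 < t < T -> locally_2d (fun _ v => 0 < v < T) x t.
Proof.
intros Ht.
exists (mkposreal _ (Rmin_glb_lt t (T - t) 0 ltac:(lra) ltac:(lra))); simpl.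
intros y v _ Hv. apply Rabs_lt_between' in Hv.
pose proof (Rmin_l t (T - t)); pose proof (Rmin_r t (T - t)). lra.
Qed.

Lemma locally_2d_of_open_strip T (P : R -> R -> Prop) x t : 0 < t < T ->
  (forall y v, 0 < v < T -> P y v) -> locally_2d P x t.
Proof.
intros Ht HP. apply (locally_2d_impl (fun _ v => 0 < v < T)).
- now apply locally_2d_forall.
- now apply locally_2d_open_strip.
Qed.

Lemma cont_on_closed_strip_continuity_2d T E x t :
  cont_on_closed_strip T E -> 0 < t < T -> continuity_2d_pt E x t.
Proof.
intros HE Ht eps.
destruct (cont_on_closed_strip_eps T E x t HE ltac:(lra) eps) as [d Hd].
apply (locally_2d_impl (fun _ v => 0 < v < T)); [|now apply locally_2d_open_strip].
exists d. intros y v Hy Hv Hstrip. apply Hd; lra.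
Qed.

Lemma ext_cont_continuity_2d T D E x t :
  ext_cont T D E -> 0 < t < T -> continuity_2d_pt D x t.
Proof.
intros [HDE HE] Ht.
apply (continuity_2d_pt_ext_loc E).
- apply (locally_2d_of_open_strip T); [exact Ht|]. intros y v Hv. now rewrite HDE.
- now apply (cont_on_closed_strip_continuity_2d T).
Qed.

Lemma differentiable_pt_lim_of_partials (F Dx : R -> R -> R) (x y dy : R) :
  locally_2d (fun u v => is_derive (fun z => F z v) u (Dx u v)) x y ->
  continuity_2d_pt Dx x y ->
  is_derive (fun z => F x z) y dy ->
  differentiable_pt_lim F x y (Dx x y) dy.
Proof.
intros [d1 HFx] HDx HFy eps.
set (e2 := pos_div_2 eps).
destruct (HDx e2) as [d2 HDx2].
destruct (proj1 (is_derive_Reals _ _ _) HFy e2 (cond_pos e2)) as [d3 HFy3].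
set (d := Rmin d1 (Rmin d2 d3)).
assert (Hd : 0 < d) by (repeat apply Rmin_glb_lt; apply cond_pos).
assert (Hdd : d <= d1 /\ d <= d2 /\ d <= d3).
{ unfold d. pose proof (Rmin_r d1 (Rmin d2 d3)).
  pose proof (Rmin_l d2 d3); pose proof (Rmin_r d2 d3).
  repeat split; [apply Rmin_l|lra|lra]. }
exists (mkposreal d Hd); simpl. intros u v Hu Hv.
assert (Hx_inc : Rabs (F u v - F x v - Dx x y * (u - x)) <= e2 * Rabs (u - x)).
{ apply (increment_bound (fun z => F z v) (fun z => Dx z v)).
  intros z Hz. split; [apply HFx; lra|].
  left. apply HDx2; lra. }
assert (Hy_inc : Rabs (F x v - F x y - dy * (v - y)) <= e2 * Rabs (v - y)).
{ destruct (Req_dec v y) as [->|Hvy].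
  - rewrite !Rminus_diag, Rmult_0_r, Rminus_0_r, Rabs_R0. lra.
  - assert (Hh : v - y <> 0) by lra.
    specialize (HFy3 (v - y) Hh ltac:(lra)).
    replace (y + (v - y)) with v in HFy3 by ring.
    replace (F x v - F x y - dy * (v - y)) with (((F x v - F x y) / (v - y) - dy) * (v - y))
      by (field; exact Hh).
    rewrite Rabs_mult. apply Rmult_le_compat_r; [apply Rabs_pos|lra]. }
replace (F u v - F x y - (Dx x y * (u - x) + dy * (v - y))) with
  ((F u v - F x v - Dx x y * (u - x)) + (F x v - F x y - dy * (v - y))) by ring.
eapply Rle_trans; [apply Rabs_triang|].
pose proof (Rmax_l (Rabs (u - x)) (Rabs (v - y))).
pose proof (Rmax_r (Rabs (u - x)) (Rabs (v - y))).
unfold e2 in *; simpl in *. pose proof (cond_pos eps). nra.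
Qed.

Lemma Rabs_le_of_right_limit (q : R -> R) (m M delta : R) : 0 < delta ->
  (forall e : posreal, exists d : posreal, forall t, 0 < t < d -> Rabs (q t - q 0) < e) ->
  (forall t, 0 < t < delta -> Rabs (q t - m) <= M) -> Rabs (q 0 - m) <= M.
Proof.
intros Hdelta Hq HM.
apply Rnot_lt_le. intros HMq.
destruct (Hq (mkposreal _ (Rgt_minus _ _ HMq))) as [d Hd]; simpl in Hd.
set (t := Rmin d delta / 2).
assert (Ht : 0 < t < d /\ t < delta).
{ pose proof (Rmin_l d delta); pose proof (Rmin_r d delta).
  pose proof (Rmin_glb_lt d delta 0 (cond_pos d) Hdelta). unfold t; lra. }
specialize (Hd t ltac:(lra)). specialize (HM t ltac:(lra)).
pose proof (Rabs_triang (q t - m) (q 0 - q t)).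
rewrite <- Rabs_Ropp in Hd.
replace (q t - m + (q 0 - q t)) with (q 0 - m) in H by ring.
replace (- (q t - q 0)) with (q 0 - q t) in Hd by ring. lra.
Qed.

Lemma cont_on_closed_strip_trace T F y : 0 < T -> cont_on_closed_strip T F ->
  forall e : posreal, exists d : posreal, forall t, 0 < t < d -> Rabs (F y t - F y 0) < e.
Proof.
intros HT HF e.
destruct (cont_on_closed_strip_eps T F y 0 HF ltac:(lra) e) as [d Hd].
exists (mkposreal _ (Rmin_glb_lt d T 0 (cond_pos d) HT)); simpl. intros t Ht.
pose proof (Rmin_l d T); pose proof (Rmin_r d T).
apply Hd; [lra|rewrite Rminus_diag, Rabs_R0; apply cond_pos|].
rewrite Rminus_0_r, Rabs_pos_eq; lra.
Qed.

Lemma is_derive_trace T u Ex x0 : 0 < T -> cont_on_closed_strip T u ->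
  (forall x t, 0 < t < T -> ex_derive (fun y => u y t) x) ->
  ext_cont T (px u) Ex -> is_derive (fun y => u y 0) x0 (Ex x0 0).
Proof.
intros HT Hu Hder [HE HEc].
apply is_derive_Reals. intros eps Heps.
set (L := Ex x0 0).
destruct (cont_on_closed_strip_eps T Ex x0 0 HEc ltac:(lra) (pos_div_2 (mkposreal _ Heps)))
  as [d Hd]; simpl in Hd.
exists d. intros h Hh0 Hhd.
assert (Hinc : Rabs (u (x0 + h) 0 - u x0 0 - L * h) <= eps / 2 * Rabs h).
{ apply (Rabs_le_of_right_limit (fun t => u (x0 + h) t - u x0 t) (L * h) _ (Rmin d T)).
  - exact (Rmin_glb_lt d T 0 (cond_pos d) HT).
  - intros e.
    destruct (cont_on_closed_strip_trace T u (x0 + h) HT Hu (pos_div_2 e)) as [d1 Hd1].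
    destruct (cont_on_closed_strip_trace T u x0 HT Hu (pos_div_2 e)) as [d2 Hd2].
    exists (mkposreal _ (Rmin_glb_lt d1 d2 0 (cond_pos d1) (cond_pos d2))); simpl.
    intros t Ht. pose proof (Rmin_l d1 d2); pose proof (Rmin_r d1 d2).
    specialize (Hd1 t ltac:(lra)); specialize (Hd2 t ltac:(lra)); simpl in Hd1, Hd2.
    replace (u (x0 + h) t - u x0 t - (u (x0 + h) 0 - u x0 0))
      with ((u (x0 + h) t - u (x0 + h) 0) + - (u x0 t - u x0 0)) by ring.
    pose proof (Rabs_triang (u (x0 + h) t - u (x0 + h) 0) (- (u x0 t - u x0 0))).
    rewrite Rabs_Ropp in H1. lra.
  - intros t Ht. pose proof (Rmin_l d T); pose proof (Rmin_r d T).
    pose proof (increment_bound (fun y => u y t) (fun y => Ex y t) x0 (x0 + h) L (eps / 2))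
      as Hinc.
    replace (x0 + h - x0) with h in Hinc by ring. apply Hinc.
    intros y Hy. split.
    + rewrite (HE y t) by lra. apply Derive_correct, Hder. lra.
    + left. apply Hd; [lra|lra|]. rewrite Rminus_0_r, Rabs_pos_eq; lra. }
replace ((u (x0 + h) 0 - u x0 0) / h - L) with ((u (x0 + h) 0 - u x0 0 - L * h) / h)
  by (field; exact Hh0).
pose proof (Rabs_pos_lt h Hh0).
unfold Rdiv. rewrite Rabs_mult, Rabs_inv.
apply Rle_lt_trans with (eps / 2 * Rabs h * / Rabs h).
- apply Rmult_le_compat_r; [left; now apply Rinv_0_lt_compat|exact Hinc].
- rewrite Rmult_assoc, Rinv_r by lra. lra.
Qed.

Lemma Rabs_Rmax0_sub_le a b : Rabs (Rmax 0 a - Rmax 0 b) <= Rabs (a - b).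
Proof.
unfold Rmax. destruct (Rle_dec 0 a), (Rle_dec 0 b);
  unfold Rabs; repeat destruct Rcase_abs; lra.
Qed.

(* Times are clamped at [0] so that the path is defined, and continuous, on all of [R]. *)
Lemma continuity_pt_along_line T E x0 s t :
  cont_on_closed_strip T E -> 0 <= t < T ->
  continuity_pt (fun tau => E (x0 - s * Rmax 0 tau) (Rmax 0 tau)) t.
Proof.
intros HE Ht. apply continuity_pt_locally. intros eps.
assert (Hmax : Rmax 0 t = t) by (apply Rmax_right; lra).
rewrite Hmax.
destruct (cont_on_closed_strip_eps T E (x0 - s * t) t HE ltac:(lra) eps) as [d Hd].
pose proof (Rabs_pos s).
assert (Hds : 0 < d / (Rabs s + 1)) by (apply Rdiv_lt_0_compat; [apply cond_pos|lra]).
exists (mkposreal _ (Rmin_glb_lt _ (T - t) 0 Hds ltac:(lra))). intros y Hy.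
change (Rabs (y - t) < Rmin (d / (Rabs s + 1)) (T - t)) in Hy.
pose proof (Rmin_l (d / (Rabs s + 1)) (T - t)); pose proof (Rmin_r (d / (Rabs s + 1)) (T - t)).
pose proof (Rabs_Rmax0_sub_le y t) as Hlip. rewrite Hmax in Hlip.
assert (Hyt : Rabs (Rmax 0 y - t) < d / (Rabs s + 1)) by lra.
assert (Hscaled : (Rabs s + 1) * Rabs (Rmax 0 y - t) < d).
{ apply (Rmult_lt_compat_l (Rabs s + 1)) in Hyt; [|lra].
  replace ((Rabs s + 1) * (d / (Rabs s + 1))) with (pos d) in Hyt by (field; lra). exact Hyt. }
pose proof (Rabs_pos (Rmax 0 y - t)).
apply Hd.
- split; [apply Rmax_l|].
  assert (Hyt2 : Rabs (Rmax 0 y - t) < T - t) by lra. apply Rabs_lt_between' in Hyt2. lra.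
- replace (x0 - s * Rmax 0 y - (x0 - s * t)) with (- s * (Rmax 0 y - t)) by ring.
  rewrite Rabs_mult, Rabs_Ropp. nra.
- nra.
Qed.

Lemma differentiable_pt_lim_strip T (v : R -> R -> R) x t :
  (forall y r, 0 < r < T -> ex_derive (fun z => v z r) y /\ ex_derive (fun r' => v y r') r) ->
  (exists E, ext_cont T (px v) E) -> 0 < t < T ->
  differentiable_pt_lim v x t (px v x t) (pt v x t).
Proof.
intros Hder [E HE] Ht.
apply differentiable_pt_lim_of_partials.
- apply (locally_2d_of_open_strip T); [exact Ht|].
  intros y r Hr. apply Derive_correct, (Hder y r Hr).
- exact (ext_cont_continuity_2d T _ E x t HE Ht).
- apply Derive_correct, (Hder x t Ht).
Qed.

(* Along [x = x0 - s t] the first-order operator [d_t + s d_x] turns into [d/dt], and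
   [(d_t - s d_x) (d_t + s d_x) = d_t^2 - d_x^2] once the mixed derivatives commute. *)
Lemma is_derive_along_characteristic T u s x0 t :
  C2_closed_strip T u -> s * s = 1 -> 0 < t < T ->
  is_derive (fun tau => pt u (x0 - s * tau) tau + s * px u (x0 - s * tau) tau) t
    (pt (pt u) (x0 - s * t) t - px (px u) (x0 - s * t) t).
Proof.
intros [Hder [_ [_ [_ [HExx [HEtx [HExt _]]]]]]] Hss Ht.
set (y := x0 - s * t).
assert (Dpt : differentiable_pt_lim (pt u) y t (px (pt u) y t) (pt (pt u) y t)).
{ apply (differentiable_pt_lim_strip T); [|exact HExt|exact Ht].
  intros z r Hr. split; apply (Hder z r Hr). }
assert (Dpx : differentiable_pt_lim (px u) y t (px (px u) y t) (pt (px u) y t)).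
{ apply (differentiable_pt_lim_strip T); [|exact HExx|exact Ht].
  intros z r Hr. split; apply (Hder z r Hr). }
assert (Hmixed : px (pt u) y t = pt (px u) y t).
{ destruct HExt as [Ext HExt]; destruct HEtx as [Etx HEtx].
  apply Schwarz.
  - apply (locally_2d_of_open_strip T); [exact Ht|]. intros a b Hb.
    destruct (Hder a b Hb) as [H1 [H2 [H3 [H4 [H5 H6]]]]]. repeat split; assumption.
  - exact (ext_cont_continuity_2d T _ Ext y t HExt Ht).
  - exact (ext_cont_continuity_2d T _ Etx y t HEtx Ht). }
assert (Hline : derivable_pt_lim (fun tau => x0 - s * tau) t (- s)).
{ apply is_derive_Reals. auto_derive; [exact I|ring]. }
pose proof (derivable_pt_lim_comp_2d (pt u) (fun tau => x0 - s * tau) (fun tau => tau) t _ _ _ _ Dpt Hline (derivable_pt_lim_id t)) as Gpt.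
pose proof (derivable_pt_lim_comp_2d (px u) (fun tau => x0 - s * tau) (fun tau => tau) t _ _ _ _ Dpx Hline (derivable_pt_lim_id t)) as Gpx.
apply is_derive_Reals in Gpt, Gpx.
pose proof (is_derive_plus _ _ _ _ _ Gpt (is_derive_scal _ _ s _ Gpx)) as G.
match type of G with is_derive _ _ ?l => replace (pt (pt u) y t - px (px u) y t) with l end;
  [exact G|].
unfold plus, scal; simpl; unfold mult; simpl.
rewrite Hmixed.
replace (s * (px (px u) y t * - s + pt (px u) y t * 1))
  with (- (s * s) * px (px u) y t + s * pt (px u) y t) by ring.
rewrite Hss. ring.
Qed.

Lemma classical_solution_lifespan p s eps f g T u x0 :
  1 < p -> s * s = 1 -> classical_solution p s eps f g T u ->
  eps * (s * Derive f x0 + g x0) <> 0 ->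
  T <= Rpower (Rabs (eps * (s * Derive f x0 + g x0))) (1 - p) / (p - 1).
Proof.
intros Hp Hss [HT [HC2 [HPDE [Hu0 [Et [[HEt HEtc] HEt0]]]]]] Hdata.
pose proof HC2 as [Hder [Hcu [[Ex [HEx HExc]] _]]].
assert (Hux0 : Ex x0 0 = eps * Derive f x0).
{ assert (Htrace : is_derive (fun y => eps * f y) x0 (Ex x0 0)).
  { apply (is_derive_ext (fun y => u y 0)); [intros y; apply Hu0|].
    apply (is_derive_trace T); [exact HT|exact Hcu| |split; assumption].
    intros x t Ht. apply (Hder x t Ht). }
  apply is_derive_unique in Htrace. now rewrite Derive_scal in Htrace. }
set (phi := fun tau => Et (x0 - s * Rmax 0 tau) (Rmax 0 tau)
                       + s * Ex (x0 - s * Rmax 0 tau) (Rmax 0 tau)).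
assert (Hphi0 : phi 0 = eps * (s * Derive f x0 + g x0)).
{ unfold phi. rewrite Rmax_left, Rmult_0_r, Rminus_0_r, HEt0, Hux0 by lra. ring. }
rewrite <- Hphi0. apply power_ode_lifespan; [exact Hp| | |now rewrite Hphi0].
- intros t Ht. apply continuity_pt_plus.
  + now apply (continuity_pt_along_line T).
  + now apply continuity_pt_scal, (continuity_pt_along_line T).
- intros t Ht.
  apply (is_derive_ext_loc (fun tau => pt u (x0 - s * tau) tau + s * px u (x0 - s * tau) tau)).
  + exists (mkposreal _ (Rmin_glb_lt t (T - t) 0 ltac:(lra) ltac:(lra))).
    intros tau Htau. change (Rabs (tau - t) < Rmin t (T - t)) in Htau.
    pose proof (Rmin_l t (T - t)); pose proof (Rmin_r t (T - t)).
    apply Rabs_lt_between' in Htau.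
    unfold phi. rewrite Rmax_right, HEt, HEx by lra. reflexivity.
  + replace (phi t) with (pt u (x0 - s * t) t + s * px u (x0 - s * t) t)
      by (unfold phi; rewrite Rmax_right, HEt, HEx by lra; reflexivity).
    unfold power_nonlinearity. rewrite <- HPDE by exact Ht.
    now apply (is_derive_along_characteristic T).
Qed.

Theorem theorem4p1 (p s : R) (f g : R -> R) (x0 : R) :
  1 < p ->
  (s = 1 \/ s = -1) ->
  C2_0 f -> C1_0 g ->
  s * Derive f x0 + g x0 <> 0 ->
  let C := Rpower (Rabs (s * Derive f x0 + g x0)) (1 - p) / (p - 1) in
  0 < C /\
  forall eps : R, 0 < eps ->
  forall T : R, T > C * Rpower eps (- (p - 1)) ->
  ~ (exists u : R -> R -> R, classical_solution p s eps f g T u).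
Proof.
intros Hp Hs _ _ Ha C.
assert (HC : 0 < C) by (apply Rdiv_lt_0_compat; [apply exp_pos|lra]).
split; [exact HC|].
intros eps Heps T HT [u Hsol].
assert (Hss : s * s = 1) by (destruct Hs as [-> | ->]; ring).
assert (Hdata : eps * (s * Derive f x0 + g x0) <> 0)
  by (apply Rmult_integral_contrapositive_currified; lra).
pose proof (classical_solution_lifespan p s eps f g T u x0 Hp Hss Hsol Hdata) as Hbound.
rewrite Rabs_mult, (Rabs_pos_eq eps), <- Rpower_mult_distr in Hbound
  by (lra || now apply Rabs_pos_lt).
replace (- (p - 1)) with (1 - p) in HT by ring.
unfold C in HT.
assert (Rpower eps (1 - p) * Rpower (Rabs (s * Derive f x0 + g x0)) (1 - p) / (p - 1)
        = Rpower (Rabs (s * Derive f x0 + g x0)) (1 - p) / (p - 1) * Rpower eps (1 - p))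
  by (field; lra).
lra.
Qed.
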